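(* For every $(w,x,y,z)\in X\setminus\{(3,3,3,3)\}$, up to conjugation we have $$ A=\rho(\alpha)= \begin{pmatrix} 0 & 0 & 1& 0 \\ 1 & 0 & 0 & 0 \\ 0 & 1 & 0 & 0 \\ 0 & 0 & 0 & 1 \end{pmatrix} \qquad \textrm{ and }\qquad AC=\rho(\alpha\gamma)= \begin{pmatrix} \lambda_1 & 0 & 0 & 0 \\ 0 & \lambda_2 & 0 & 0 \\ 0 & 0 & \lambda_3 & 0 \\ 0 & 0 & 0 & 1 \end{pmatrix} $$ with $\lambda_i\in \mathbb{R}$, $\lambda_i>0$ and $\lambda_1\neq \pm 1$.
   Context: Let $O$ be the hyperbolic 3--orbifold obtained from the one-tetrahedron, two-vertex triangulation of $S^3$ by deleting the vertices and modelling edge neighbourhoods on $\mathbb{R}^3/\langle r\rangle$, $r$ a rotation by $120^\circ$. Writing the ideal simplex as $[v_1,v_2,v_3,v_4]$ with face pairings $\alpha[v_1,v_2,v_3]=[v_1,v_2,v_4]$ and $\beta[v_2,v_3,v_4]=[v_1,v_3,v_4]$, one has $\pi_1^{orb}(O)=\langle \alpha,\beta : \alpha^3=\beta^3=(\alpha\beta\alpha^{-1}\beta^{-1})^3=1\rangle$. Set $\gamma=[\alpha,\beta]=\alpha\beta\alpha^{-1}\beta^{-1}$. Real projective structures on $O$ modelled on a 3--simplex have holonomy $\rho$ with (up to conjugacy) $$A=\rho(\alpha)=\begin{pmatrix} 1 & 0 & 0 & a_1 \\ 0 & 1 & 0 & a_2 \\ 0 & 0 & 0 & -1\\ 0 &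 0 & 1 & -1 \end{pmatrix},\quad B=\rho(\beta)=\begin{pmatrix} -1 & 1 & 0 & 0 \\ -1 & 0 & 0 & 0 \\ b_3 & 0 & 1 & 0\\ b_4 & 0 & 0 & 1 \end{pmatrix},$$ where $(a_1+a_2)(b_3+b_4)=3+a_1a_2b_3b_4$, and $C=ABA^{-1}B^{-1}=\rho(\gamma)$. The parameters are $w=a_1b_4$, $x=a_1b_3$, $y=a_2b_3$, $z=a_2b_4$ (equivalently $w=2+\operatorname{tr}AB$, $x=2+\operatorname{tr}A^{-1}B$, $y=2+\operatorname{tr}A^{-1}B^{-1}$, $z=2+\operatorname{tr}AB^{-1}$). $X$ denotes the connected component, containing $(3,3,3,3)$, of the set of $(w,x,y,z)\in\mathbb{R}^4$ satisfying $w+x+y+z=3+wy$ and $wy=zx$; it is distinguished from the other component by $x>1$ and $z>1$. The point $(3,3,3,3)$ corresponds to the complete hyperbolic structure on $O$. The stabilizer of $v_1$ is generated by $\alpha,\gamma$ (a $(3,3,3)$-turnover group), whose maximal torsion-free subgroup is $\langle\alpha\gamma,\gamma\alpha\rangle\cong\mathbb{Z}^2$. *)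

From HB Require Import structures.
From mathcomp Require Import all_boot all_order all_algebra.
From mathcomp Require Import reals.
Set Implicit Arguments. Unset Strict Implicit. Unset Printing Implicit Defensive.
Import Order.TTheory GRing.Theory Num.Theory.
Local Open Scope ring_scope.

Section Holonomy.
Variable R : realType.

Definition matA (a1 a2 : R) : 'M[R]_4 :=
  \matrix_(i < 4, j < 4)
    match nat_of_ord i, nat_of_ord j with
    | 0, 0 => 1 | 1, 1 => 1
    | 0, 3 => a1 | 1, 3 => a2
    | 2, 3 => -1
    | 3, 2 => 1 | 3, 3 => -1
    | _, _ => 0
    end.

Definition matB (b3 b4 : R) : 'M[R]_4 :=
  \matrix_(i < 4, j < 4)
    match nat_of_ord i, nat_of_ord j with
    | 0, 0 => -1 | 0, 1 => 1
    | 1, 0 => -1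
    | 2, 0 => b3 | 2, 2 => 1
    | 3, 0 => b4 | 3, 3 => 1
    | _, _ => 0
    end.

Definition matC (a1 a2 b3 b4 : R) : 'M[R]_4 :=
  matA a1 a2 *m matB b3 b4 *m invmx (matA a1 a2) *m invmx (matB b3 b4).

Definition permA : 'M[R]_4 :=
  \matrix_(i < 4, j < 4)
    match nat_of_ord i, nat_of_ord j with
    | 0, 2 => 1 | 1, 0 => 1 | 2, 1 => 1 | 3, 3 => 1
    | _, _ => 0
    end.

Definition diag4 (l1 l2 l3 : R) : 'M[R]_4 :=
  \matrix_(i < 4, j < 4)
    if i == j then
      match nat_of_ord i with 0 => l1 | 1 => l2 | 2 => l3 | _ => 1 end
    else 0.

(* The component X of {w+x+y+z = 3 + wy, wy = zx} containing (3,3,3,3),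
   via the characterisation x > 1, z > 1 given in the paper. *)
Definition inX (w x y z : R) : Prop :=
  [/\ w + x + y + z = 3 + w * y, w * y = z * x, 1 < x & 1 < z].

End Holonomy.

(* Both rho(alpha) and rho(alpha gamma) fix the first basis vector and a common
   row vector f, so they act on row vectors with first coordinate 0 through 3x3
   blocks A3 and AC3.  The characteristic polynomial of AC3 is
   x^3 - t x^2 + s x - 1, and a sum-of-squares identity gives t > 3 and s >= 3
   on X minus (3,3,3,3); such a cubic has only positive roots, one of them a
   simple root l <> 1.  The l-eigenline of AC3 is then one-dimensional, and since
   AC3 commutes with its conjugates by A3 (images of the abelian group
   <alpha gamma, gamma alpha>), the A3-orbit of an l-eigenvector consists of
   eigenvectors of AC3.  They are independent because l is not the eigenvalue of a
   common eigenvector of A3 and AC3.  These three rows together with f form the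
   conjugating matrix. *)

From HB Require Import structures.
From mathcomp Require Import all_boot all_order all_algebra.
From mathcomp Require Import reals.
From mathcomp Require Import ring lra zify.
Set Implicit Arguments. Unset Strict Implicit. Unset Printing Implicit Defensive.
Import Order.TTheory GRing.Theory Num.Theory.
Local Open Scope ring_scope.

Section SmallMatrices.
Variable R : comNzRingType.

Lemma det_mx22 (f : nat -> nat -> R) :
  \det (\matrix_(i < 2, j < 2) f i j) = f 0%N 0%N * f 1%N 1%N - f 0%N 1%N * f 1%N 0%N.
Proof.
rewrite (expand_det_row _ ord0) !big_ord_recl big_ord0 /cofactor !det_mx11 !mxE /bump /=.
ring.
Qed.

Definition mat3 (n00 n01 n02 n10 n11 n12 n20 n21 n22 : R) : 'M[R]_3 :=
  \matrix_(i < 3, j < 3)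
    match nat_of_ord i, nat_of_ord j with
    | 0, 0 => n00 | 0, 1 => n01 | 0, _ => n02
    | 1, 0 => n10 | 1, 1 => n11 | 1, _ => n12
    | _, 0 => n20 | _, 1 => n21 | _, _ => n22
    end.

Lemma mul_mat3 n00 n01 n02 n10 n11 n12 n20 n21 n22 k00 k01 k02 k10 k11 k12 k20 k21 k22 :
  mat3 n00 n01 n02 n10 n11 n12 n20 n21 n22 *m mat3 k00 k01 k02 k10 k11 k12 k20 k21 k22 =
  mat3 (n00 * k00 + n01 * k10 + n02 * k20) (n00 * k01 + n01 * k11 + n02 * k21)
       (n00 * k02 + n01 * k12 + n02 * k22)
       (n10 * k00 + n11 * k10 + n12 * k20) (n10 * k01 + n11 * k11 + n12 * k21)
       (n10 * k02 + n11 * k12 + n12 * k22)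
       (n20 * k00 + n21 * k10 + n22 * k20) (n20 * k01 + n21 * k11 + n22 * k21)
       (n20 * k02 + n21 * k12 + n22 * k22).
Proof.
apply/matrixP => -[[|[|[|?]]] ?] -[[|[|[|?]]] ?] //;
  rewrite !mxE !big_ord_recl big_ord0 !mxE /=; ring.
Qed.

Lemma mat3_sub_scalar n00 n01 n02 n10 n11 n12 n20 n21 n22 x :
  mat3 n00 n01 n02 n10 n11 n12 n20 n21 n22 - x%:M =
  mat3 (n00 - x) n01 n02 n10 (n11 - x) n12 n20 n21 (n22 - x).
Proof. by apply/matrixP => -[[|[|[|?]]] ?] -[[|[|[|?]]] ?] //; rewrite !mxE /= ?subr0. Qed.

Lemma det_mat3 n00 n01 n02 n10 n11 n12 n20 n21 n22 :
  \det (mat3 n00 n01 n02 n10 n11 n12 n20 n21 n22) =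
  n00 * (n11 * n22 - n12 * n21) - n01 * (n10 * n22 - n12 * n20)
    + n02 * (n10 * n21 - n11 * n20).
Proof.
rewrite (expand_det_row _ ord0) !big_ord_recl big_ord0 /cofactor.
rewrite !(expand_det_row _ ord0) !big_ord_recl !big_ord0 /cofactor !det_mx11 !mxE /bump /=.
ring.
Qed.

Lemma scalar_mat3 a : a%:M = mat3 a 0 0 0 a 0 0 0 a.
Proof. by apply/matrixP => -[[|[|[|?]]] ?] -[[|[|[|?]]] ?] //; rewrite !mxE. Qed.

Definition row3 (x0 x1 x2 : R) : 'rV[R]_3 :=
  \row_(j < 3) match nat_of_ord j with 0 => x0 | 1 => x1 | _ => x2 end.

Definition mat4 (n00 n01 n02 n03 n10 n11 n12 n13 n20 n21 n22 n23 n30 n31 n32 n33 : R)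
    : 'M[R]_4 :=
  \matrix_(i < 4, j < 4)
    match nat_of_ord i, nat_of_ord j with
    | 0, 0 => n00 | 0, 1 => n01 | 0, 2 => n02 | 0, _ => n03
    | 1, 0 => n10 | 1, 1 => n11 | 1, 2 => n12 | 1, _ => n13
    | 2, 0 => n20 | 2, 1 => n21 | 2, 2 => n22 | 2, _ => n23
    | _, 0 => n30 | _, 1 => n31 | _, 2 => n32 | _, _ => n33
    end.

Lemma mul_mat4 n00 n01 n02 n03 n10 n11 n12 n13 n20 n21 n22 n23 n30 n31 n32 n33
    k00 k01 k02 k03 k10 k11 k12 k13 k20 k21 k22 k23 k30 k31 k32 k33 :
  mat4 n00 n01 n02 n03 n10 n11 n12 n13 n20 n21 n22 n23 n30 n31 n32 n33 *m
  mat4 k00 k01 k02 k03 k10 k11 k12 k13 k20 k21 k22 k23 k30 k31 k32 k33 =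
  mat4
    (n00 * k00 + n01 * k10 + n02 * k20 + n03 * k30) (n00 * k01 + n01 * k11 + n02 * k21 + n03 * k31)
    (n00 * k02 + n01 * k12 + n02 * k22 + n03 * k32) (n00 * k03 + n01 * k13 + n02 * k23 + n03 * k33)
    (n10 * k00 + n11 * k10 + n12 * k20 + n13 * k30) (n10 * k01 + n11 * k11 + n12 * k21 + n13 * k31)
    (n10 * k02 + n11 * k12 + n12 * k22 + n13 * k32) (n10 * k03 + n11 * k13 + n12 * k23 + n13 * k33)
    (n20 * k00 + n21 * k10 + n22 * k20 + n23 * k30) (n20 * k01 + n21 * k11 + n22 * k21 + n23 * k31)
    (n20 * k02 + n21 * k12 + n22 * k22 + n23 * k32) (n20 * k03 + n21 * k13 + n22 * k23 + n23 * k33)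
    (n30 * k00 + n31 * k10 + n32 * k20 + n33 * k30) (n30 * k01 + n31 * k11 + n32 * k21 + n33 * k31)
    (n30 * k02 + n31 * k12 + n32 * k22 + n33 * k32) (n30 * k03 + n31 * k13 + n32 * k23 + n33 * k33).
Proof.
apply/matrixP => -[[|[|[|[|?]]]] ?] -[[|[|[|[|?]]]] ?] //;
  rewrite !mxE !big_ord_recl big_ord0 !mxE /=; ring.
Qed.

Lemma scalar_mat4 a : a%:M = mat4 a 0 0 0 0 a 0 0 0 0 a 0 0 0 0 a.
Proof. by apply/matrixP => -[[|[|[|[|?]]]] ?] -[[|[|[|[|?]]]] ?] //; rewrite !mxE. Qed.

Lemma mat4_block_e0 n01 n02 n03 n11 n12 n13 n21 n22 n23 n31 n32 n33 :
  (mat4 1 n01 n02 n03 0 n11 n12 n13 0 n21 n22 n23 0 n31 n32 n33 : 'M_(1 + 3)) =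
  block_mx 1 (row3 n01 n02 n03) 0 (mat3 n11 n12 n13 n21 n22 n23 n31 n32 n33).
Proof.
rewrite -[LHS](@submxK _ 1 3 1 3); congr block_mx;
  by apply/matrixP => -[[|[|[|?]]] ?] -[[|[|[|?]]] ?] //; rewrite !mxE.
Qed.

Lemma mat4_block_e3 n00 n01 n02 n10 n11 n12 n20 n21 n22 :
  (mat4 n00 n01 n02 0 n10 n11 n12 0 n20 n21 n22 0 0 0 0 1 : 'M_(3 + 1)) =
  block_mx (mat3 n00 n01 n02 n10 n11 n12 n20 n21 n22) 0 0 1%:M.
Proof.
rewrite -[LHS](@submxK _ 3 1 3 1); congr block_mx;
  by apply/matrixP => -[[|[|[|?]]] ?] -[[|[|[|?]]] ?] //; rewrite !mxE.
Qed.

End SmallMatrices.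

Section Eigenvectors.
Variable F : fieldType.

Lemma eigenvalue_det n (M : 'M[F]_n) a : eigenvalue M a = (\det (M - a%:M) == 0).
Proof.
apply/eigenvalueP/det0P => [[v Mv v_neq0] | [v v_neq0 Mv]]; exists v => //.
  by rewrite mulmxBr Mv mul_mx_scalar subrr.
by apply/eqP; rewrite -subr_eq0 -mul_mx_scalar -mulmxBr Mv.
Qed.

Lemma mxrank_minor2 m n (N : 'M[F]_(m, n)) i j k l :
  N i k * N j l - N i l * N j k != 0 -> (2 <= \rank N)%N.
Proof.
move=> minor_neq0.
pose f (r : nat) := if r is 0%N then i else j.
pose g (c : nat) := if c is 0%N then k else l.
pose S := mxsub (f \o @nat_of_ord 2) (g \o @nat_of_ord 2) N.
have <- : \rank S = 2%N.
  apply: mxrank_unit; rewrite unitmxE unitfE.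
  have -> : S = \matrix_(r < 2, c < 2) N (f r) (g c) by apply/matrixP => r c; rewrite !mxE.
  by rewrite (det_mx22 (fun r c => N (f r) (g c))).
rewrite /S -[N in mxsub _ _ N]mul1mx mxsub_mul -[N in colsub _ N]mulmx1 -mulmx_colsub.
exact: leq_trans (mxrankM_maxr _ _) (mxrankM_maxl _ _).
Qed.

Section OneDimensionalEigenspace.
Variables (n : nat) (M : 'M[F]_n) (l : F) (X : 'rV[F]_n).
Hypotheses (eigenspace_le1 : (\rank (eigenspace M l) <= 1)%N)
           (X_neq0 : X != 0) (MX : X *m M = l *: X).

Lemma eigenvector_multiple (Y : 'rV_n) : Y *m M = l *: Y -> exists k, Y = k *: X.
Proof.
move=> /eigenspaceP MY; apply/sub_rVP; apply: submx_trans MY _.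
have X_sub : (X <= eigenspace M l)%MS by apply/eigenspaceP.
have /andP[] // : (X == eigenspace M l)%MS.
by rewrite -(mxrank_leqif_eq X_sub).2 eqn_leq mxrankS // rank_rV X_neq0.
Qed.

Lemma eigenvector_conj (T S : 'M_n) : S *m T = 1%:M ->
  M *m (T *m M *m S) = T *m M *m S *m M -> exists k, X *m T *m M = k *: (X *m T).
Proof.
move=> ST comm.
have [k Ek] : exists k, X *m (T *m M *m S) = k *: X.
  by apply: eigenvector_multiple; rewrite -mulmxA -comm mulmxA MX -scalemxAl.
exists k; have -> : X *m T *m M = X *m (T *m M *m S) *m T.
  by rewrite !mulmxA -(mulmxA _ S) ST mulmx1.
by rewrite Ek -scalemxAl.
Qed.

End OneDimensionalEigenspace.

Lemma eigenspace_rank_le1 n (M : 'M[F]_n) l :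
  (n.-1 <= \rank (M - l%:M)%R)%N -> (\rank (eigenspace M l) <= 1)%N.
Proof. by rewrite /eigenspace mxrank_ker; lia. Qed.

Lemma mulmx_sub_scalar n (M : 'M[F]_n) (Y : 'rV_n) c a :
  Y *m M = c *: Y -> Y *m (M - a%:M) = (c - a) *: Y.
Proof. by move=> MY; rewrite mulmxBr MY mul_mx_scalar scalerBl. Qed.

Section Orbit.
Variables (n : nat) (M T : 'M[F]_n) (l : F) (X : 'rV[F]_n).
Hypotheses (T3 : T *m T *m T = 1%:M)
           (eigenspace_le1 : (\rank (eigenspace M l) <= 1)%N)
           (X_neq0 : X != 0) (MX : X *m M = l *: X)
           (no_common : forall (Y : 'rV_n) k,
              Y != 0 -> Y *m T = k *: Y -> Y *m M != l *: Y)
           (commute_T : M *m (T *m M *m (T *m T)) = T *m M *m (T *m T) *m M)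
           (commute_T2 : M *m (T *m T *m M *m T) = T *m T *m M *m T *m M).

Let XTT_T : X *m T *m T *m T = X.
Proof. by rewrite -!mulmxA [T *m (T *m T)]mulmxA T3 mulmx1. Qed.

Lemma orbit_neq0 : X *m T *m T != 0 /\ X *m T != 0.
Proof.
by split; apply: contraNneq X_neq0 => Z0; rewrite -XTT_T ?Z0 ?mul0mx // -mulmxA Z0 mul0mx.
Qed.

Lemma orbit_eigenvectors :
  exists mu nu, X *m T *m T *m M = mu *: (X *m T *m T) /\ X *m T *m M = nu *: (X *m T).
Proof.
have TT_T : T *m (T *m T) = 1%:M by rewrite mulmxA.
have [mu] := eigenvector_conj eigenspace_le1 X_neq0 MX TT_T commute_T2.
have [nu] := eigenvector_conj eigenspace_le1 X_neq0 MX T3 commute_T.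
by rewrite mulmxA; exists mu, nu.
Qed.

Lemma orbit_eigenvalues_neq mu nu :
  X *m T *m T *m M = mu *: (X *m T *m T) -> X *m T *m M = nu *: (X *m T) ->
  mu != l /\ nu != l.
Proof.
move=> ME MG; split; apply/eqP => eq_l.
- rewrite eq_l in ME.
  have [k XTT] := eigenvector_multiple eigenspace_le1 X_neq0 MX ME.
  have k_neq0 : k != 0 by apply: contraNneq (proj1 orbit_neq0) => k0; rewrite XTT k0 scale0r.
  have XT : X *m T = k^-1 *: X.
    by rewrite -[X in RHS]XTT_T XTT -scalemxAl scalerA mulVf ?scale1r.
  by have /negP[] := no_common X_neq0 XT; rewrite MX.
- rewrite eq_l in MG.
  have [k XT] := eigenvector_multiple eigenspace_le1 X_neq0 MX MG.
  by have /negP[] := no_common X_neq0 XT; rewrite MX.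
Qed.

Lemma orbit_free mu nu :
  X *m T *m T *m M = mu *: (X *m T *m T) -> X *m T *m M = nu *: (X *m T) ->
  forall v0 v1 v2, v0 *: X + v1 *: (X *m T *m T) + v2 *: (X *m T) = 0 ->
  [/\ v0 = 0, v1 = 0 & v2 = 0].
Proof.
move=> ME MG v0 v1 v2 comb.
have [mu_neq_l nu_neq_l] := orbit_eigenvalues_neq ME MG.
have ET : X *m T *m T *m T = X := XTT_T.
have [E_neq0 _] := orbit_neq0.
move: ME MG comb ET E_neq0; set E := X *m T *m T; set G := X *m T => ME MG comb ET E_neq0.
(* (M - mu) (M - nu) kills E and G but not X *)
have v0_eq0 : v0 = 0.
  have := congr1 (fun Z => Z *m (M - mu%:M) *m (M - nu%:M)) comb.
  rewrite /= !mul0mx !mulmxDl -!scalemxAl !(mulmx_sub_scalar _ MX, mulmx_sub_scalar _ ME,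
    mulmx_sub_scalar _ MG) -!scalemxAl !(mulmx_sub_scalar _ MX, mulmx_sub_scalar _ MG).
  rewrite !subrr !scale0r !scaler0 !addr0 !scalerA => /eqP.
  rewrite scalemx_eq0 (negbTE X_neq0) orbF !mulf_eq0 !subr_eq0 ![l == _]eq_sym.
  by rewrite (negbTE mu_neq_l) (negbTE nu_neq_l) !orbF => /eqP.
move: comb; rewrite v0_eq0 scale0r add0r => comb.
have [v2_eq0 | v2_neq0] := eqVneq v2 0.
  move: comb; rewrite v2_eq0 scale0r addr0 => /eqP.
  by rewrite scalemx_eq0 (negbTE E_neq0) orbF => /eqP.
have GE : G = (- (v1 / v2)) *: E.
  apply: (scalerI v2_neq0); rewrite scalerA mulrN mulrCA mulfV // mulr1 scaleNr.
  by apply/eqP; rewrite -addr_eq0 addrC comb.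
have EX : E = (- (v1 / v2)) *: X by rewrite -[X]ET scalemxAl -GE.
have /eqP : (mu - l) *: E = 0.
  by rewrite scalerBl -ME {1}EX -scalemxAl MX EX !scalerA mulrC subrr.
by rewrite scalemx_eq0 subr_eq0 (negbTE mu_neq_l) (negbTE E_neq0).
Qed.

End Orbit.

Definition orbit_mx (T : 'M[F]_3) (X : 'rV[F]_3) : 'M[F]_3 :=
  \matrix_(i < 3) nth 0 [:: X; X *m T *m T; X *m T] i.

Lemma orbit_mx_unit (T : 'M[F]_3) (X : 'rV[F]_3) :
  (forall v0 v1 v2, v0 *: X + v1 *: (X *m T *m T) + v2 *: (X *m T) = 0 ->
     [/\ v0 = 0, v1 = 0 & v2 = 0]) ->
  orbit_mx T X \in unitmx.
Proof.
move=> free; rewrite unitmxE unitfE; apply/negP => /det0P[w w_neq0].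
rewrite mulmx_sum_row !big_ord_recl big_ord0 !rowK addr0 addrA => /free[w0 w1 w2].
apply/negP: w_neq0; rewrite negbK; apply/eqP/rowP => -[[|[|[|//]]] lt_j];
  rewrite mxE; [rewrite -w0 | rewrite -w1 | rewrite -w2]; congr (w _ _); exact: val_inj.
Qed.

Lemma orbit_mx_cycle (T : 'M[F]_3) (X : 'rV[F]_3) : T *m T *m T = 1%:M ->
  orbit_mx T X *m T = mat3 0 0 1 1 0 0 0 1 0 *m orbit_mx T X.
Proof.
move=> T3; apply/row_matrixP => -[[|[|[|//]]] lt_i];
  rewrite !row_mul [in RHS]mulmx_sum_row !big_ord_recl big_ord0 /orbit_mx !rowK !mxE /=;
  rewrite !scale0r !scale1r ?add0r ?addr0 //.
by rewrite -!mulmxA [T *m (T *m T)]mulmxA T3 mulmx1.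
Qed.

Lemma orbit_mx_diag (M T : 'M[F]_3) (X : 'rV[F]_3) l mu nu :
  X *m M = l *: X -> X *m T *m T *m M = mu *: (X *m T *m T) -> X *m T *m M = nu *: (X *m T) ->
  orbit_mx T X *m M = mat3 l 0 0 0 mu 0 0 0 nu *m orbit_mx T X.
Proof.
move=> MX ME MG; apply/row_matrixP => -[[|[|[|//]]] lt_i];
  rewrite !row_mul [in RHS]mulmx_sum_row !big_ord_recl big_ord0 /orbit_mx !rowK !mxE /=;
  by rewrite !scale0r ?add0r ?addr0.
Qed.

End Eigenvectors.

Lemma mul_row0_block (R : pzRingType) m n p (Q : 'M[R]_(m, n)) (c : 'M_p) r (S : 'M_n) :
  row_mx (0 : 'M_(m, p)) Q *m block_mx c r 0 S = row_mx 0 (Q *m S).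
Proof. by rewrite mul_row_block !mul0mx !mulmx0 !add0r. Qed.

Lemma conj_invmx_eq (F : fieldType) n (P A B : 'M[F]_n) :
  P \in unitmx -> P *m A = B *m P -> P *m A *m invmx P = B.
Proof. by move=> P_unit ->; rewrite -mulmxA mulmxV // mulmx1. Qed.

Lemma mul_fixed_block (R : pzRingType) n (Q S D : 'M[R]_n) c r (v : 'rV_(1 + n)) :
  v *m block_mx c r 0 S = v -> Q *m S = D *m Q ->
  col_mx (row_mx 0 Q) v *m block_mx c r 0 S = block_mx D 0 0 1%:M *m col_mx (row_mx 0 Q) v.
Proof.
move=> vK QS; rewrite mul_col_mx mul_row0_block vK QS mul_block_col mul_mx_row.
by rewrite !mul0mx mulmx0 addr0 add0r mul1mx.
Qed.

Lemma unitmx_col_row0 (F : fieldType) (Q : 'M[F]_3) (v : 'rV[F]_(1 + 3)) :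
  Q \in unitmx -> v 0 0 != 0 -> (col_mx (row_mx 0 Q) v : 'M_4) \in unitmx.
Proof.
move=> Q_unit v0_neq0.
set c := v 0 0; have vE : v = row_mx c%:M (rsubmx v).
  rewrite -[LHS]hsubmxK [lsubmx v]mx11_scalar mxE; congr (row_mx (v 0 _)%:M _).
  exact: val_inj.
pose B := block_mx (- c^-1 *: (rsubmx v *m invmx Q)) (c^-1)%:M (invmx Q) 0.
suff /mulmx1_unit[] : col_mx (row_mx 0 Q) v *m B = 1%:M by [].
rewrite vE mulmx_block !mul0mx !mulmx0 !add0r addr0 mulmxV // -scalar_mxM mulfV //.
rewrite mul_scalar_mx scalerA mulrN mulfV // scaleN1r addNr.
by rewrite -scalar_mx_block.
Qed.

Section Cubic.
Variable R : rcfType.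
Implicit Types t s x : R.

Definition cubic t s x := x ^+ 3 - t * x ^+ 2 + s * x - 1.

Lemma cubic_root_gt0 t s x : 0 <= t -> 0 <= s -> cubic t s x = 0 -> 0 < x.
Proof.
rewrite /cubic => t_ge0 s_ge0 root_x; rewrite ltNge; apply/negP => x_le0.
have : x ^+ 3 <= 0 by rewrite exprS; nra.
have : 0 <= t * x ^+ 2 by rewrite mulr_ge0 ?sqr_ge0.
have : s * x <= 0 by nra.
lra.
Qed.

Lemma cubic_root_neq1 t s : 3 < t -> 0 <= s -> exists2 x, cubic t s x = 0 & x != 1.
Proof.
move=> t_gt3 s_ge0.
pose p : {poly R} := 'X^3 - t%:P * 'X^2 + s%:P * 'X - 1.
have pE x : p.[x] = cubic t s x by rewrite /p /cubic !hornerE.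
have root_ivt a b : a <= b -> cubic t s a <= 0 <= cubic t s b ->
    exists2 x, cubic t s x = 0 & a <= x <= b.
  move=> le_ab sgn; rewrite -!pE in sgn.
  have [x ab_x /rootP] := poly_ivt le_ab sgn.
  by rewrite pE; exists x.
have [lt_st | lt_ts | eq_st] := ltgtP s t.
- have [x root_x /andP[x_ge1 _]] : exists2 x, cubic t s x = 0 & 1 <= x <= t + 1.
    apply: root_ivt; first lra.
    rewrite /cubic; apply/andP; split; first lra.
    have -> : (t + 1) ^+ 3 - t * (t + 1) ^+ 2 = (t + 1) ^+ 2 by ring.
    have : 0 <= s * (t + 1) by rewrite mulr_ge0 //; lra.
    rewrite expr2; nra.
  exists x => //; apply/eqP => x_eq1; move: root_x; rewrite x_eq1 /cubic; lra.
- have [x root_x _] : exists2 x, cubic t s x = 0 & 0 <= x <= 1.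
    by apply: root_ivt; rewrite /cubic; lra.
  exists x => //; apply/eqP => x_eq1; move: root_x; rewrite x_eq1 /cubic; lra.
(* for s = t the cubic is (x - 1) (x^2 - (t - 1) x + 1) *)
pose q : {poly R} := 'X^2 - (t - 1)%:P * 'X + 1.
have [x /andP[x_ge1 x_let] /rootP] : exists2 x, 1 <= x <= t & root q x.
  by apply: poly_ivt; rewrite ?hornerE; lra.
rewrite /q !hornerE => root_x.
exists x; last by apply/eqP => x_eq1; move: root_x; rewrite x_eq1; lra.
have -> : cubic t s x = (x - 1) * (x ^+ 2 - (t - 1) * x + 1) by rewrite /cubic eq_st; ring.
by rewrite root_x mulr0.
Qed.

Definition dcubic t s x := 3 * x ^+ 2 - 2 * t * x + s.

Lemma cubic_simple_root t s : 3 < t -> 0 <= s ->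
  exists x, [/\ cubic t s x = 0, dcubic t s x != 0, x != 1 & 0 < x].
Proof.
move=> t_gt3 s_ge0.
have [x root_x x_neq1] := cubic_root_neq1 t_gt3 s_ge0.
have x_gt0 : 0 < x by apply: cubic_root_gt0 root_x; lra.
have [double_x | ] := eqVneq (dcubic t s x) 0; last by exists x.
(* the third root of a cubic with double root x is x^-2 *)
have x_neq0 : x != 0 by rewrite gt_eqF.
have tx2 : t * x ^+ 2 = 2 * x ^+ 3 + 1.
  have : x * dcubic t s x - cubic t s x = 0 by rewrite double_x root_x; ring.
  rewrite /dcubic /cubic; lra.
have sx : s * x = x ^+ 3 + 2.
  have : x * dcubic t s x = 0 by rewrite double_x mulr0.
  rewrite /dcubic; lra.
have tE : t = (2 * x ^+ 3 + 1) / x ^+ 2.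
  by apply: (mulIf (expf_neq0 2 x_neq0)); rewrite divfK ?expf_neq0.
have sE : s = (x ^+ 3 + 2) / x by apply: (mulIf x_neq0); rewrite divfK.
have x3_neq1 : x ^+ 3 != 1.
  apply: contra x_neq1 => /eqP x3; apply/eqP.
  have : (x - 1) * (x ^+ 2 + x + 1) = 0 by rewrite -[RHS](subrr 1) -{3}x3; ring.
  move/eqP; rewrite mulf_eq0 => /orP[/eqP|/eqP]; nra.
exists (x ^- 2); split.
- by rewrite /cubic tE sE; field.
- have -> : dcubic t s (x ^- 2) = (x ^- 2 - x) ^+ 2 by rewrite /dcubic tE sE; field.
  rewrite sqrf_eq0 subr_eq0; apply: contra x3_neq1 => /eqP x3.
  by rewrite exprS -{1}x3 mulVf ?expf_neq0.
- rewrite invr_eq1; apply: contra x_neq1 => /eqP x2; apply/eqP.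
  have : (x - 1) * (x + 1) = 0 by rewrite -[RHS](subrr 1) -{3}x2; ring.
  move/eqP; rewrite mulf_eq0 => /orP[/eqP|/eqP]; lra.
- by rewrite invr_gt0 exprn_gt0.
Qed.
End Cubic.

Section Region.
Variable R : realType.
Implicit Types w x y z : R.

Lemma inX_identities w x y z : w + x + y + z = 3 + w * y -> w * y = z * x ->
  (z - 1) * (x * y - x - y) = (y - 1) ^+ 2 + (x - 1) /\
  (w - 1) * (x * y - x - y) = (x - 1) ^+ 2 + (y - 1).
Proof.
move=> sum_eq prod_eq; split; apply/eqP; rewrite -subr_eq0; apply/eqP.
- transitivity (y * (3 + w * y - (w + x + y + z)) + (z * x - w * y) * (y - 1)).
    by ring.
  by rewrite sum_eq prod_eq !subrr; ring.
- transitivity (x * (3 + w * y - (w + x + y + z)) + (z * x - w * y)); first ring.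
  by rewrite sum_eq prod_eq !subrr; ring.
Qed.

Lemma inX_gt1 w x y z : inX w x y z -> 1 < w /\ 1 < y.
Proof.
case=> sum_eq prod_eq x_gt1 z_gt1.
have [zu wu] := inX_identities sum_eq prod_eq.
have u_gt0 : 0 < x * y - x - y.
  have : 0 < (z - 1) * (x * y - x - y) by rewrite zu; have := sqr_ge0 (y - 1); lra.
  by rewrite pmulr_rgt0 // subr_gt0.
have y_gt1 : 1 < y by nra.
split => //.
have : 0 < (w - 1) * (x * y - x - y) by rewrite wu; have := sqr_ge0 (x - 1); lra.
by rewrite pmulr_lgt0 // subr_gt0.
Qed.

Lemma trace_ge3 w x y z : w + x + y + z = 3 + w * y -> w * y = z * x ->
  1 < w -> 1 < x -> 1 < y -> 1 < z ->
  3 <= x * y - 2 * x - 2 * y + w + z /\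
  (x * y - 2 * x - 2 * y + w + z = 3 -> [/\ w = 3, x = 3, y = 3 & z = 3]).
Proof.
move=> sum_eq prod_eq w_gt1 x_gt1 y_gt1 z_gt1.
have [zu wu] := inX_identities sum_eq prod_eq.
set u := x * y - x - y in zu wu.
have u_gt0 : 0 < u.
  have : 0 < (z - 1) * u by rewrite zu; have := sqr_ge0 (y - 1); lra.
  by rewrite pmulr_rgt0 // subr_gt0.
have sos : (x * y - 2 * x - 2 * y + w + z - 3) * u =
    (x * y - 3 / 2 * (x + y)) ^+ 2 + 3 / 4 * (x - y) ^+ 2.
  transitivity ((x * y - 2 * x - 2 * y - 1) * u + (w - 1) * u + (z - 1) * u); first ring.
  by rewrite wu zu /u; field.
have sos_ge0 : 0 <= (x * y - 3 / 2 * (x + y)) ^+ 2 + 3 / 4 * (x - y) ^+ 2.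
  by apply: addr_ge0; [exact: sqr_ge0 | apply: mulr_ge0; [lra | exact: sqr_ge0]].
split; first nra.
move=> T_eq3; move: sos; rewrite T_eq3 subrr mul0r => /esym sos0.
have sq1 := sqr_ge0 (x * y - 3 / 2 * (x + y)); have sq2 := sqr_ge0 (x - y).
have /eqP : (x - y) ^+ 2 = 0 by lra.
rewrite sqrf_eq0 subr_eq0 => /eqP x_eq_y.
have /eqP : (x * y - 3 / 2 * (x + y)) ^+ 2 = 0 by lra.
rewrite sqrf_eq0 -x_eq_y => /eqP xx.
have x_eq3 : x = 3.
  have /eqP : x * (x - 3) = 0 by rewrite -[RHS]xx; field.
  by rewrite mulf_eq0 subr_eq0 => /orP[/eqP x0|/eqP]; last done; lra.
have u_eq3 : u = 3 by rewrite /u -x_eq_y x_eq3; ring.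
by split; rewrite -?x_eq_y //; nra.
Qed.
End Region.

Section Holonomy.
Variables (R : realType) (a1 a2 b3 b4 : R).

Lemma matA_mat4 : matA a1 a2 = mat4 1 0 0 a1 0 1 0 a2 0 0 0 (-1) 0 0 1 (-1).
Proof. by apply/matrixP => -[[|[|[|[|?]]]] ?] -[[|[|[|[|?]]]] ?] //; rewrite !mxE. Qed.

Lemma matB_mat4 : matB b3 b4 = mat4 (-1) 1 0 0 (-1) 0 0 0 b3 0 1 0 b4 0 0 1.
Proof. by apply/matrixP => -[[|[|[|[|?]]]] ?] -[[|[|[|[|?]]]] ?] //; rewrite !mxE. Qed.

Lemma matA_cube : matA a1 a2 *m matA a1 a2 *m matA a1 a2 = 1%:M.
Proof. by rewrite matA_mat4 !mul_mat4 scalar_mat4; congr mat4; ring. Qed.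

Lemma matB_cube : matB b3 b4 *m matB b3 b4 *m matB b3 b4 = 1%:M.
Proof. by rewrite matB_mat4 !mul_mat4 scalar_mat4; congr mat4; ring. Qed.

Definition A3 : 'M[R]_3 := mat3 1 0 a2 0 0 (-1) 0 1 (-1).

Definition AC3 : 'M[R]_3 :=
  mat3 (a1 * a2 * b3 ^+ 2 - a1 * b3 - 2 * a2 * b3 + a2 * b4 + 1) (a1 * a2 * b3 - a1 - a2) a2
       (- a1 * b3 ^+ 2 + a1 * b3 * b4 + b3 - 2 * b4) (- a1 * b3 + a1 * b4) (-1)
       (- a1 * b3 ^+ 2 + 2 * b3 - b4) (- a1 * b3 + 1) (-1).

Definition rowAC : 'rV[R]_3 :=
  row3 (a1 ^+ 2 * b3 ^+ 2 - 3 * a1 * b3 + a1 * b4 + a2 * b3) (a1 ^+ 2 * b3 - 2 * a1 + a2) a1.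

Lemma matA_block : (matA a1 a2 : 'M_(1 + 3)) = block_mx 1 (row3 0 0 a1) 0 A3.
Proof. by rewrite matA_mat4 mat4_block_e0. Qed.

Lemma matAC_block :
  (matA a1 a2 *m matC a1 a2 b3 b4 : 'M_(1 + 3)) = block_mx 1 rowAC 0 AC3.
Proof.
have [A_unit _] := mulmx1_unit (etrans (mulmxA _ _ _) matA_cube).
have [B_unit _] := mulmx1_unit (etrans (mulmxA _ _ _) matB_cube).
rewrite /matC !mulmxA; apply: (canLR (mulmxK B_unit)); apply: (canLR (mulmxK A_unit)).
rewrite /rowAC /AC3 -mat4_block_e0 matA_mat4 matB_mat4 !mul_mat4.
by congr mat4; ring.
Qed.

Definition fixed_row : 'rV[R]_(1 + 3) :=
  \row_(j < 1 + 3) match nat_of_ord j with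
    | 0 => a1 * a2 * b3 + a1 * a2 * b4 - 3 * a1 - 3 * a2
    | 1 => - a1 ^+ 2 * b3 - a1 ^+ 2 * b4 + 6 * a1 - 3 * a2
    | _ => - a1 ^+ 2 + a1 * a2 - a2 ^+ 2
    end.

Lemma fixed_row_matA : fixed_row *m (matA a1 a2 : 'M_(1 + 3)) = fixed_row.
Proof.
rewrite matA_mat4; apply/rowP => -[[|[|[|[|?]]]] ?] //;
  rewrite !mxE !big_ord_recl big_ord0 !mxE /=; ring.
Qed.

Lemma fixed_row_block_AC : fixed_row *m block_mx 1 rowAC 0 AC3 = fixed_row.
Proof.
rewrite /rowAC /AC3 -mat4_block_e0; apply/rowP => -[[|[|[|[|?]]]] ?] //;
  rewrite !mxE !big_ord_recl big_ord0 !mxE /=; ring.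
Qed.

Lemma A3_cube : A3 *m A3 *m A3 = 1%:M.
Proof. by rewrite /A3 !mul_mat3 scalar_mat3; congr mat3; ring. Qed.

Lemma constraint_b4_coef_neq0 :
  (a1 + a2) * (b3 + b4) = 3 + a1 * a2 * b3 * b4 -> a1 + a2 - a1 * a2 * b3 != 0.
Proof.
move=> constraint; apply/eqP => coef0.
(* otherwise x = a1 b3 and y = a2 b3 would be real roots of X^2 - 3 X + 3 *)
have sum3 : a1 * b3 + a2 * b3 = 3.
  have : (a1 + a2) * b4 = a1 * a2 * b3 * b4 by rewrite -[a1 + a2]subr0 -coef0; ring.
  by move: constraint; rewrite mulrDr => ?; lra.
have prod3 : a1 * b3 * (a2 * b3) = 3.
  have : a1 * b3 * (a2 * b3) = (a1 + a2) * b3 by rewrite -[a1 + a2]subr0 -coef0; ring.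
  by lra.
have := sqr_ge0 (a1 * b3 - a2 * b3).
have -> : (a1 * b3 - a2 * b3) ^+ 2 = (a1 * b3 + a2 * b3) ^+ 2 - 4 * (a1 * b3 * (a2 * b3)) by ring.
by rewrite sum3 prod3; lra.
Qed.

Lemma AC3_commute :
  (a1 + a2) * (b3 + b4) = 3 + a1 * a2 * b3 * b4 ->
  AC3 *m (A3 *m AC3 *m (A3 *m A3)) = A3 *m AC3 *m (A3 *m A3) *m AC3 /\
  AC3 *m (A3 *m A3 *m AC3 *m A3) = A3 *m A3 *m AC3 *m A3 *m AC3.
Proof.
(* AC3 commutes with the images of gamma alpha and alpha^2 gamma alpha^-1, which lie
   in the abelian group <alpha gamma, gamma alpha>; here this is a direct computation. *)
move=> constraint; have coef_neq0 := constraint_b4_coef_neq0 constraint.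
rewrite /A3 /AC3 !mul_mat3.
(* the constraint is affine in b4 *)
have -> : b4 = (3 - (a1 + a2) * b3) / (a1 + a2 - a1 * a2 * b3).
  by apply: (mulIf coef_neq0); rewrite divfK //; lra.
by split; congr mat3; field.
Qed.

(* Written in the coordinates w = a1 b4, x = a1 b3, y = a2 b3, z = a2 b4 of X. *)
Definition tAC := a1 * b3 * (a2 * b3) - 2 * (a1 * b3) - 2 * (a2 * b3) + a1 * b4 + a2 * b4.
Definition sAC := a1 * b4 * (a2 * b4) - 2 * (a1 * b4) - 2 * (a2 * b4) + a1 * b3 + a2 * b3.

Lemma det_AC3_sub x : \det (AC3 - x%:M) = - cubic tAC sAC x.
Proof. by rewrite /AC3 mat3_sub_scalar det_mat3 /cubic /tAC /sAC; ring. Qed.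

Lemma eigenvalue_AC3 x : eigenvalue AC3 x = (cubic tAC sAC x == 0).
Proof. by rewrite eigenvalue_det det_AC3_sub oppr_eq0. Qed.

Lemma AC3_sub_rank x : dcubic tAC sAC x != 0 -> (2 <= \rank (AC3 - x%:M)%R)%N.
Proof.
rewrite /AC3 mat3_sub_scalar; set N := mat3 _ _ _ _ _ _ _ _ _ => simple_x.
(* the principal 2x2 minors of N add up to the derivative of the cubic *)
have minors : (N 0 0 * N 1 1 - N 0 1 * N 1 0) + (N 0 0 * N 2 2 - N 0 2 * N 2 0)
    + (N 1 1 * N 2 2 - N 1 2 * N 2 1) = dcubic tAC sAC x.
  by rewrite !mxE /= /dcubic /tAC /sAC; ring.
have [m01|] := eqVneq (N 0 0 * N 1 1 - N 0 1 * N 1 0) 0; last exact: mxrank_minor2.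
have [m02|] := eqVneq (N 0 0 * N 2 2 - N 0 2 * N 2 0) 0; last exact: mxrank_minor2.
apply: (mxrank_minor2 (i := 1) (j := 2) (k := 1) (l := 2)).
by move: simple_x; rewrite -minors m01 m02 !add0r.
Qed.

Lemma A3_AC3_common_eigenvector (Y : 'rV_3) k c : a2 != 0 -> Y != 0 ->
  Y *m A3 = k *: Y -> Y *m AC3 = c *: Y -> c = 1.
Proof.
move=> a2_neq0 Y_neq0 YA YAC.
have entry (Z1 Z2 : 'rV[R]_3) j : Z1 = Z2 -> Z1 0 j = Z2 0 j by move->.
move: (entry _ _ ord0 YA) (entry _ _ (lift ord0 ord0) YA).
move: (entry _ _ (lift ord0 (lift ord0 ord0)) YA) (entry _ _ (lift ord0 (lift ord0 ord0)) YAC).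
rewrite /A3 /AC3 !mxE !big_ord_recl !big_ord0 !mxE /=.
set y0 := Y 0 ord0; set y1 := Y 0 (lift ord0 ord0); set y2 := Y 0 (lift ord0 (lift ord0 ord0)).
move=> A_2 AC_2 A_0 A_1.
have Y_ne0 : ~ [/\ y0 = 0, y1 = 0 & y2 = 0].
  case=> y00 y10 y20; move/negP: Y_neq0; apply; apply/eqP/rowP => -[[|[|[|//]]] lt_j];
    rewrite mxE; [rewrite -y00 | rewrite -y10 | rewrite -y20]; congr (Y _ _); exact: val_inj.
have [y00 | y0_neq0] := eqVneq y0 0.
  have /eqP : y1 * (k ^+ 2 + k + 1) = 0.
    transitivity (y1 + k * y1 + k * (k * y1)); first ring.
    by rewrite y00 in A_2; rewrite -A_1; lra.
  rewrite mulf_eq0 => /orP[/eqP y10 | /eqP k2]; last by nra.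
  by case: Y_ne0; split => //; rewrite y10 mulr0 in A_1; lra.
have k1 : k = 1 by apply: (mulIf y0_neq0); lra.
rewrite k1 !mul1r in A_1 A_2.
have y2_neq0 : y2 != 0.
  apply/eqP => y20; have y10 : y1 = 0 by lra.
  have /eqP : y0 * a2 = 0 by lra.
  by rewrite mulf_eq0 (negbTE y0_neq0) (negbTE a2_neq0).
by apply: (mulIf y2_neq0); lra.
Qed.

Lemma fixed_row_neq0 : (a1 + a2) * (b3 + b4) = 3 + a1 * a2 * b3 * b4 -> 3 < tAC ->
  fixed_row 0 0 != 0.
Proof.
move=> constraint t_gt3; apply/eqP => f00.
have : fixed_row 0 0 * b3 = tAC - 3 by rewrite mxE /= /tAC; lra.
by rewrite f00 mul0r; lra.
Qed.

Lemma AC3_orbit_eigenbasis :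
  (a1 + a2) * (b3 + b4) = 3 + a1 * a2 * b3 * b4 -> a2 != 0 -> 3 < tAC -> 0 <= sAC ->
  exists X l mu nu, [/\ orbit_mx A3 X \in unitmx,
    orbit_mx A3 X *m AC3 = mat3 l 0 0 0 mu 0 0 0 nu *m orbit_mx A3 X,
    [/\ 0 < l, 0 < mu & 0 < nu] & l != 1].
Proof.
move=> constraint a2_neq0 t_gt3 s_ge0.
have [l [root_l simple_l l_neq1 l_gt0]] := cubic_simple_root t_gt3 s_ge0.
have /eigenvalueP[X MX X_neq0] : eigenvalue AC3 l by rewrite eigenvalue_AC3 root_l.
have le1 : (\rank (eigenspace AC3 l) <= 1)%N.
  by apply: eigenspace_rank_le1; exact: AC3_sub_rank.
have no_common (Y : 'rV_3) k : Y != 0 -> Y *m A3 = k *: Y -> Y *m AC3 != l *: Y.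
  move=> Y_neq0 YA; apply/eqP => YAC.
  by move: l_neq1; rewrite (A3_AC3_common_eigenvector a2_neq0 Y_neq0 YA YAC) eqxx.
have [comm1 comm2] := AC3_commute constraint.
have [mu [nu [ME MG]]] := orbit_eigenvectors A3_cube le1 X_neq0 MX comm1 comm2.
have eigen_gt0 (Y : 'rV_3) c : Y != 0 -> Y *m AC3 = c *: Y -> 0 < c.
  move=> Y_neq0 YAC; have t_ge0 : 0 <= tAC by lra.
  apply: (cubic_root_gt0 t_ge0 s_ge0); apply/eqP.
  by rewrite -eigenvalue_AC3; apply/eigenvalueP; exists Y.
have [E_neq0 G_neq0] := orbit_neq0 A3_cube X_neq0.
exists X, l, mu, nu; split => //.
- exact: orbit_mx_unit (orbit_free A3_cube le1 X_neq0 MX no_common ME MG).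
- exact: orbit_mx_diag.
- by split => //; [apply: eigen_gt0 E_neq0 ME | apply: eigen_gt0 G_neq0 MG].
Qed.

End Holonomy.

Lemma permA_block (R : realType) :
  (permA R : 'M_(3 + 1)) = block_mx (mat3 0 0 1 1 0 0 0 1 0) 0 0 1%:M.
Proof.
rewrite -mat4_block_e3; congr (_ : 'M_4).
by apply/matrixP => -[[|[|[|[|?]]]] ?] -[[|[|[|[|?]]]] ?] //; rewrite !mxE.
Qed.

Lemma diag4_block (R : realType) (l1 l2 l3 : R) :
  (diag4 l1 l2 l3 : 'M_(3 + 1)) = block_mx (mat3 l1 0 0 0 l2 0 0 0 l3) 0 0 1%:M.
Proof.
rewrite -mat4_block_e3; congr (_ : 'M_4).
by apply/matrixP => -[[|[|[|[|?]]]] ?] -[[|[|[|[|?]]]] ?] //; rewrite !mxE.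
Qed.

Theorem lemma3p3 (R : realType) (a1 a2 b3 b4 : R) :
  (a1 + a2) * (b3 + b4) = 3 + a1 * a2 * b3 * b4 ->
  inX (a1 * b4) (a1 * b3) (a2 * b3) (a2 * b4) ->
  ~ (a1 * b4 = 3 /\ a1 * b3 = 3 /\ a2 * b3 = 3 /\ a2 * b4 = 3) ->
  exists (P : 'M[R]_4) (l1 l2 l3 : R),
    [/\ P \in unitmx,
        P *m matA a1 a2 *m invmx P = permA R,
        P *m (matA a1 a2 *m matC a1 a2 b3 b4) *m invmx P = diag4 l1 l2 l3,
        [/\ 0 < l1, 0 < l2 & 0 < l3] &
        l1 != 1 /\ l1 != -1].
Proof.
move=> constraint inX_wxyz not_complete.
have [sum_eq prod_eq x_gt1 z_gt1] := inX_wxyz.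
have [w_gt1 y_gt1] := inX_gt1 inX_wxyz.
have [t_ge3 t_eq3] := trace_ge3 sum_eq prod_eq w_gt1 x_gt1 y_gt1 z_gt1.
have t_gt3 : 3 < tAC a1 a2 b3 b4.
  rewrite lt_neqAle t_ge3 andbT eq_sym; apply/eqP => /t_eq3[*].
  by apply: not_complete.
(* X is symmetric under (x, y) <-> (w, z), which exchanges tAC and sAC *)
have s_ge0 : 0 <= sAC a1 a2 b3 b4.
  have [s_ge3 _] := @trace_ge3 _ (a1 * b3) (a1 * b4) (a2 * b4) (a2 * b3)
    ltac:(lra) ltac:(ring) x_gt1 w_gt1 z_gt1 y_gt1.
  by rewrite /sAC; lra.
have a2_neq0 : a2 != 0 by apply: contraTneq z_gt1 => ->; rewrite mul0r; lra.
have [X [l [mu [nu [Q_unit QAC eig_gt0 l_neq1]]]]] :=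
  AC3_orbit_eigenbasis constraint a2_neq0 t_gt3 s_ge0.
set Q := orbit_mx (A3 a2) X in Q_unit QAC.
have P_unit := unitmx_col_row0 Q_unit (fixed_row_neq0 constraint t_gt3).
exists (col_mx (row_mx 0 Q) (fixed_row a1 a2 b3 b4)), l, mu, nu; split => //.
- apply: conj_invmx_eq => //; rewrite matA_block permA_block.
  apply: (mul_fixed_block (n := 3)); first by rewrite -matA_block fixed_row_matA.
  exact/orbit_mx_cycle/A3_cube.
- apply: conj_invmx_eq => //; rewrite matAC_block diag4_block.
  by apply: (mul_fixed_block (n := 3)) QAC; apply: fixed_row_block_AC.
- case: eig_gt0 => l_gt0 _ _; split => //.
  by apply/eqP => l_eqN1; move: l_gt0; rewrite l_eqN1; lra.
Qed.
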